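(* For all $n\geq 0$, the bijection $\Psi_n:\mathfrak{S}_n\to\mathcal{PP}(n)$ is an isomorphism of posets when $\mathfrak{S}_n$ is ordered by the weak Bruhat order and $\mathcal{PP}(n)$ by $\leq$: for all $\sigma,\tau\in\mathfrak{S}_n$, $\sigma\leq\tau$ if and only if $\Psi_n(\sigma)\leq\Psi_n(\tau)$.
   Context: A plane poset is a finite set with two partial orders $\leq_h,\leq_r$ such that two distinct elements are $\leq_h$-comparable iff they are not $\leq_r$-comparable; $\mathcal{PP}(n)$ is the set of isomorphism classes of plane posets with $n$ elements. On a plane poset, $x\leq y$ iff ($x\leq_h y$ or $x\leq_r y$) is a total order (known fact). For $P,Q\in\mathcal{PP}(n)$, $\theta_{P,Q}$ is the increasing bijection $P\to Q$ for these total orders, and $P\leq Q$ means: for all $x,y\in P$, $\theta_{P,Q}(x)\leq_h\theta_{P,Q}(y)$ in $Q$ implies $x\leq_h y$ in $P$. For $\sigma\in\mathfrak{S}_n$, $\Psi_n(\sigma)$ is the plane poset on $\{1,\ldots,n\}$ with $a\leq_h b$ iff ($a\leq b$ and $\sigma^{-1}(a)\leq\sigma^{-1}(b)$) and $a\leq_r b$ iff ($a\leq b$ and $\sigma^{-1}(a)\geq\sigma^{-1}(b)$); $\Psi_n$ is known to be a bijection. The weak Bruhat order on $\mathfrak{S}_n$: $\sigma\leq\tau$ iff there is a sequence $\sigma=\sigma_0,\ldots,\sigma_k=\tau$ where each word $\sigma_{p+1}(1)\cdots\sigma_{p+1}(n)$ is obtained from $\sigma_p(1)\cdots\sigma_p(n)$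 by exchanging two consecutive letters $ij$ with $i<j$ (into $ji$). *)

From mathcomp Require Import all_boot all_fingroup.
Set Implicit Arguments. Unset Strict Implicit. Unset Printing Implicit Defensive.

Record pposet (T : finType) := PPoset { le_h : rel T; le_r : rel T }.

Definition partial_order (T : finType) (R : rel T) : Prop :=
  reflexive R /\ antisymmetric R /\ transitive R.

(* The plane poset axioms (for documentation; Psi_n is known to produce them). *)
Definition is_plane_poset (T : finType) (P : pposet T) : Prop :=
  partial_order (le_h P) /\ partial_order (le_r P) /\
  forall x y, x != y ->
    (le_h P x y || le_h P y x) = ~~ (le_r P x y || le_r P y x).

Definition ptot (T : finType) (P : pposet T) : rel T :=
  fun x y => le_h P x y || le_r P x y.

Definition increasing_bij (T U : finType) (P : pposet T) (Q : pposet U)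
  (theta : T -> U) : Prop :=
  bijective theta /\ forall x y, ptot P x y = ptot Q (theta x) (theta y).

(* P <= Q : for all x y, theta(x) <=_h theta(y) in Q implies x <=_h y in P,
   where theta = theta_{P,Q} is the (unique) increasing bijection. *)
Definition pp_le (T U : finType) (P : pposet T) (Q : pposet U) : Prop :=
  forall theta : T -> U, increasing_bij P Q theta ->
    forall x y, le_h Q (theta x) (theta y) -> le_h P x y.

(* Psi_n(sigma), on {0,...,n-1} instead of {1,...,n}. *)
Definition Psi (n : nat) (s : 'S_n) : pposet 'I_n :=
  PPoset (fun a b : 'I_n => (a <= b)%N && ((s^-1)%g a <= (s^-1)%g b)%N)
         (fun a b : 'I_n => (a <= b)%N && ((s^-1)%g b <= (s^-1)%g a)%N).

(* One step of the weak Bruhat order: the word s(0)...s(n-1) has letters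
   i j (i < j) at consecutive positions k, k+1, and t is obtained by
   exchanging them into j i. *)
Definition wb_step (n : nat) (s t : 'S_n) : Prop :=
  exists (p q : 'I_n), q = p.+1 :> nat /\ (s p < s q)%N /\
    forall x, t x = s (tperm p q x).

Inductive wb_le (n : nat) (s : 'S_n) : 'S_n -> Prop :=
  | wb_refl : wb_le s s
  | wb_next : forall r t, wb_le s r -> wb_step r t -> wb_le s t.

(* Both orders reduce to inclusion of inversion sets. The total order of
   Psi s is the natural order of 'I_n, so theta_{Psi s, Psi t} is the
   identity and Psi s <= Psi t says that every inversion of s is one of t.
   Swapping an adjacent ascent p, p+1 of the word of s adds exactly the
   inversion (s p, s p+1). Conversely, if inv s is contained in inv t and no
   adjacent ascent of s is an inversion of t, then t^-1 o s increases on
   adjacent positions, hence is the identity; so while s <> t some swap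
   stays below t and strictly increases the number of inversions. *)

From mathcomp Require Import all_boot all_fingroup zify.
Set Implicit Arguments. Unset Strict Implicit. Unset Printing Implicit Defensive.

Lemma tperm_val n (p q z : 'I_n) :
  val (tperm p q z) = if z == p then val q else if z == q then val p else val z.
Proof.
case: tpermP => [->|->|zp zq]; rewrite ?eqxx //; first by case: eqP => // ->.
by do 2 case: eqP => // _.
Qed.

Lemma ltn_tperm_adjacent n (p q a b : 'I_n) : q = p.+1 :> nat ->
  (a, b) != (p, q) -> (a, b) != (q, p) -> (tperm p q a < tperm p q b) = (a < b).
Proof.
move=> pq; rewrite !xpair_eqE !tperm_val -!(inj_eq val_inj) /=.
by repeat case: eqP => ?; lia.
Qed.

(* Pairs of letters x < y written in the order y ... x in the word
   s(0) ... s(n-1), i.e. the pairs x < y with x <=_r y in Psi s. *)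
Definition inversions n (s : 'S_n) : {set 'I_n * 'I_n} :=
  [set xy : 'I_n * 'I_n | (xy.1 < xy.2) && ((s^-1)%g xy.2 < (s^-1)%g xy.1)].

Lemma mem_inversions_perm n (s : 'S_n) a b :
  ((s a, s b) \in inversions s) = (s a < s b) && (b < a).
Proof. by rewrite inE /= !permK. Qed.

Lemma inversions_swap n (s : 'S_n) (p q : 'I_n) : q = p.+1 :> nat -> s p < s q ->
  inversions (tperm p q * s) = (s p, s q) |: inversions s.
Proof.
move=> pq spq; apply/setP => -[x y].
rewrite -[x](permKV s) -[y](permKV s); move: (s^-1 x)%g (s^-1 y)%g => a b.
rewrite in_setU1 mem_inversions_perm inE /= invMg !permM !permK tpermV.
have ltpq : p < q by rewrite pq.
have [[-> ->]|ab_pq] := eqVneq (b, a) (p, q).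
  rewrite (leq_gtF (ltnW spq)) xpair_eqE !(inj_eq perm_inj) !(eq_sym q) andbb.
  by rewrite -(inj_eq val_inj) (ltn_eqF ltpq).
have [[-> ->]|ab_qp] := eqVneq (b, a) (q, p).
  by rewrite eqxx spq tpermL tpermR ltpq.
rewrite ltn_tperm_adjacent // xpair_eqE !(inj_eq perm_inj).
by move: ab_qp; rewrite xpair_eqE andbC => /negbTE ->.
Qed.

Lemma adjacent_increasing_ord_id n (f : 'I_n -> 'I_n) :
  (forall i j : 'I_n, j = i.+1 :> nat -> f i < f j) -> f =1 id.
Proof.
move=> f_incr.
have ge_id k (i : 'I_n) : i = k :> nat -> k <= f i.
  elim: k i => [//|k IH] i ik.
  have lt_kn : k < n by rewrite -ltnS -ik ltnS ltnW.
  by have := f_incr (Ordinal lt_kn) i ik; have := IH (Ordinal lt_kn) erefl; lia.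
have le_id k (i : 'I_n) : i + k = n.-1 -> f i <= i.
  elim: k i => [|k IH] i ik; first by have := ltn_ord (f i); lia.
  have lt_in : i.+1 < n by have := ltn_ord i; lia.
  by have := f_incr i (Ordinal lt_in) erefl; have := IH (Ordinal lt_in); rewrite /=; lia.
move=> i; apply/val_inj/eqP; rewrite eqn_leq (le_id (n.-1 - i)) ?(ge_id i) //.
by have := ltn_ord i; lia.
Qed.

Lemma ptot_Psi n (s : 'S_n) x y : ptot (Psi s) x y = (x <= y).
Proof. by rewrite /ptot /= -andb_orr leq_total andbT. Qed.

Lemma increasing_bij_Psi n (s t : 'S_n) theta :
  increasing_bij (Psi s) (Psi t) theta <-> theta =1 id.
Proof.
split=> [[_ theta_mono] | theta_id].
  apply: adjacent_increasing_ord_id => i j ij.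
  by rewrite ltnNge -(ptot_Psi t) -theta_mono ptot_Psi -ltnNge ij.
split; first by exists id => x; rewrite theta_id.
by move=> x y; rewrite !theta_id !ptot_Psi.
Qed.

Lemma pp_le_Psi n (s t : 'S_n) :
  pp_le (Psi s) (Psi t) <-> inversions s \subset inversions t.
Proof.
split=> [le_st | /subsetP sub_st theta /increasing_bij_Psi theta_id x y].
  apply/subsetP => -[x y]; rewrite !inE /= => /andP[lt_xy s_xy].
  rewrite lt_xy /= ltnNge; apply: contraL s_xy => t_xy; rewrite -leqNgt.
  have id_incr : increasing_bij (Psi s) (Psi t) id by apply/increasing_bij_Psi.
  have t_h_xy : le_h (Psi t) x y by rewrite /= (ltnW lt_xy) t_xy.
  by have /andP[] := le_st id id_incr x y t_h_xy.
rewrite !theta_id /= => /andP[le_xy t_xy]; rewrite le_xy leqNgt /=.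
apply: contraL t_xy => s_yx; rewrite -ltnNge.
have lt_xy : x < y.
  by rewrite ltn_neqAle le_xy andbT; apply: contraTneq s_yx => /val_inj ->; rewrite ltnn.
by have := sub_st (x, y); rewrite !inE /= lt_xy s_yx => /(_ isT).
Qed.

Lemma wb_step_tperm n (s : 'S_n) (p q : 'I_n) : q = p.+1 :> nat -> s p < s q ->
  wb_step s (tperm p q * s).
Proof. by move=> pq spq; exists p, q; do 2 split=> //; move=> x; rewrite permM. Qed.

Lemma wb_step_inversions n (s t : 'S_n) :
  wb_step s t -> inversions s \subset inversions t.
Proof.
move=> [p [q [pq [spq tE]]]].
have -> : t = (tperm p q * s)%g by apply/permP => x; rewrite permM tE.
by rewrite inversions_swap // subsetUr.
Qed.

Lemma wb_le_inversions n (s t : 'S_n) : wb_le s t -> inversions s \subset inversions t.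
Proof.
elim=> [|r u _ sub_sr /wb_step_inversions sub_ru]; first exact: subxx.
exact: subset_trans sub_ru.
Qed.

Lemma wb_le_step_l n (s r t : 'S_n) : wb_step s r -> wb_le r t -> wb_le s t.
Proof.
move=> sr; elim=> [|u v _ le_su uv]; first exact: wb_next (wb_refl s) sr.
exact: wb_next le_su uv.
Qed.

Lemma inversions_subset_eq n (s t : 'S_n) : inversions s \subset inversions t ->
  (forall p q : 'I_n, q = p.+1 :> nat -> s p < s q -> (s p, s q) \notin inversions t) ->
  s = t.
Proof.
move=> /subsetP sub_st no_ascent.
suff tVs_id : (t^-1 \o s)%g =1 id.
  by apply/permP => i; rewrite -[s i](permKV t) -[X in _ = t X](tVs_id i).
apply: adjacent_increasing_ord_id => p q pq /=.
have ltpq : p < q by rewrite pq.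
have neq_pq : s p != s q by rewrite (inj_eq perm_inj) -(inj_eq val_inj) (ltn_eqF ltpq).
case: (ltngtP (s p) (s q)) => [spq | sqp | /val_inj epq]; last by rewrite epq eqxx in neq_pq.
- have := no_ascent p q pq spq; rewrite inE /= spq /= -leqNgt leq_eqVlt => /orP[|//].
  by rewrite (inj_eq val_inj) (inj_eq perm_inj) (negbTE neq_pq).
- have := sub_st (s q, s p); rewrite mem_inversions_perm sqp pq ltnSn => /(_ isT).
  by rewrite inE /= sqp.
Qed.

Lemma wb_le_of_inversions_subset n (s t : 'S_n) :
  inversions s \subset inversions t -> wb_le s t.
Proof.
have [k] := ubnP (#|inversions t| - #|inversions s|).
elim: k s => // k IH s lt_k sub_st.
have [|no_ascent] := boolP [exists p : 'I_n, exists q : 'I_n,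
  [&& q == p.+1 :> nat, s p < s q & (s p, s q) \in inversions t]].
  move=> /existsP[p /existsP[q /and3P[/eqP pq spq tpq]]].
  have inv_swap := inversions_swap pq spq.
  have notin_s : (s p, s q) \notin inversions s.
    by rewrite mem_inversions_perm (leq_gtF (_ : p <= q)) ?andbF // pq.
  have sub_swap_t : inversions (tperm p q * s) \subset inversions t.
    by rewrite inv_swap subUset sub1set tpq.
  apply: wb_le_step_l (wb_step_tperm pq spq) (IH _ _ sub_swap_t).
  by have := subset_leq_card sub_swap_t; rewrite inv_swap cardsU1 notin_s; lia.
rewrite (inversions_subset_eq sub_st) => [|p q pq spq]; first exact: wb_refl.
apply: contraNN no_ascent => tpq.
by apply/existsP; exists p; apply/existsP; exists q; rewrite pq eqxx spq tpq.
Qed.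

Theorem theorem15 (n : nat) (s t : 'S_n) :
  wb_le s t <-> pp_le (Psi s) (Psi t).
Proof.
rewrite pp_le_Psi; split; [exact: wb_le_inversions | exact: wb_le_of_inversions_subset].
Qed.
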